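(* Let $g:\mathbb{R}^m\to\overline{\mathbb{R}}$ be a polyhedral function and $(\bar z,\bar\lambda)\in\mathrm{gph}\,\partial g$. Then: (a) there exists $r>0$ such that for all $(z,\lambda)\in(\mathrm{gph}\,\partial g)\cap\mathbb{B}_r(\bar z,\bar\lambda)$, $$K_g(z,\lambda)\subset K_g(\bar z,\bar\lambda)-K_g(\bar z,\bar\lambda)\quad\text{and}\quad K_g(\bar z,\bar\lambda)\cap -K_g(\bar z,\bar\lambda)\subset K_g(z,\lambda);$$ (b) if in addition $\bar\lambda\in\mathrm{ri}\,\partial g(\bar z)$, then there exists $r>0$ such that for all $(z,\lambda)\in(\mathrm{gph}\,\partial g)\cap\mathbb{B}_r(\bar z,\bar\lambda)$ we have $\lambda\in\mathrm{ri}\,\partial g(z)$ and $K_g(z,\lambda)=K_g(\bar z,\bar\lambda)$.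
   Context: A proper function $g:\mathbb{R}^m\to\overline{\mathbb{R}}$ is polyhedral if its epigraph is a polyhedral convex set; $\partial g$ is the convex-analysis subdifferential and $\mathrm{ri}$ denotes relative interior. For $z$ with $g(z)$ finite, ${\rm d} g(z)(w)=\liminf_{t\searrow 0,\,w'\to w}\frac{g(z+tw')-g(z)}{t}$, and for $\lambda\in\partial g(z)$ the critical cone is $K_g(z,\lambda)=\{w\mid\langle\lambda,w\rangle={\rm d} g(z)(w)\}$ (equal to $N_{\partial g(z)}(\lambda)$ for convex $g$). $\mathbb{B}_r(\cdot)$ denotes a closed ball in $\mathbb{R}^m\times\mathbb{R}^m$ with the Euclidean product norm. *)

From HB Require Import structures.
From mathcomp Require Import all_boot all_order all_algebra.
From mathcomp Require Import all_classical all_reals all_analysis.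
Set Implicit Arguments. Unset Strict Implicit. Unset Printing Implicit Defensive.
Import Order.TTheory GRing.Theory Num.Theory.
Local Open Scope classical_set_scope.
Local Open Scope ring_scope.

Section Defs.
Variables (R : realType) (m : nat).
Notation vec := 'rV[R]_m.

Definition inner (u v : vec) : R := \sum_(i < m) u 0 i * v 0 i.
Definition sqnorm (u : vec) : R := inner u u.
Definition vnorm (u : vec) : R := Num.sqrt (sqnorm u).

Definition proper_fun (g : vec -> \bar R) : Prop :=
  (forall z, g z <> -oo%E) /\ exists z, g z \is a fin_num.

Definition epigraph (g : vec -> \bar R) : set (vec * R) :=
  [set p | (g p.1 <= p.2%:E)%E].

Definition polyhedral_set (C : set (vec * R)) : Prop :=
  exists (k : nat) (A : 'I_k -> vec) (c b : 'I_k -> R),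
    forall p : vec * R, C p <-> (forall i, inner (A i) p.1 + c i * p.2 <= b i).

Definition polyhedral_fun (g : vec -> \bar R) : Prop :=
  proper_fun g /\ polyhedral_set (epigraph g).

Definition subdiff (g : vec -> \bar R) (z : vec) : set vec :=
  [set l | g z \is a fin_num /\
           forall w, g z + (inner l (w - z)%R)%:E <= g w]%E.

(* subderivative dg(z)(w) = liminf_{t \searrow 0, w' -> w} (g(z + t w') - g(z)) / t *)
Definition subderiv (g : vec -> \bar R) (z w : vec) : \bar R :=
  ereal_sup [set ereal_inf
     [set x | exists (t : R) (w' : vec),
         0 < t < e /\ vnorm (w' - w) < e /\
         x = ((g (z + t *: w')%R - g z) * (t^-1)%:E)%E]
   | e in [set e : R | 0 < e]].

Definition crit_cone (g : vec -> \bar R) (z l : vec) : set vec :=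
  [set w | (inner l w)%:E = subderiv g z w].

Definition aff_hull (C : set vec) : set vec :=
  [set x | exists (n : nat) (c : 'I_n -> vec) (mu : 'I_n -> R),
      (forall i, C (c i)) /\ \sum_(i < n) mu i = 1 /\
      x = \sum_(i < n) mu i *: c i].

Definition rel_int (C : set vec) : set vec :=
  [set x | C x /\ exists e : R, 0 < e /\
      forall y, aff_hull C y -> vnorm (y - x) < e -> C y].

Definition set_diff_minkowski (K : set vec) : set vec :=
  [set x | exists u v, K u /\ K v /\ x = u - v].

Definition set_opp (K : set vec) : set vec := [set x | K (- x)].

Definition in_ball2 (r : R) (zb lb z l : vec) : Prop :=
  sqnorm (z - zb) + sqnorm (l - lb) <= r ^+ 2.

End Defs.

(* Write epi g = {(x, t) | <A_i, x> + c_i t <= b_i}.  Everything is read off the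
   tangent cone T(z) of epi g at (z, g z), cut out by the constraints active
   there: l \in ∂g(z) iff <l, w> <= s on T(z), and w \in K_g(z, l) iff
   (w, <l, w>) \in T(z).  Near zb only constraints active at zb can be active,
   so (z - zb, g z - g zb) + t T(z) lies in T(zb) for small t > 0; hence
   ∂g(z) is contained in ∂g(zb).  As T(zb) has finitely many faces, for every
   l \in ∂g(zb) close enough to lb the directions x with (x, <l, x>) \in T(zb)
   are critical for lb, which yields K_g(z, l) \subset K - K for
   K = K_g(zb, lb).  If moreover lb \in ri ∂g(zb), every active constraint is
   tight on K, so K is a subspace and ∂g(z) = ∂g(zb) near zb. *)

From HB Require Import structures.
From mathcomp Require Import all_boot all_order all_algebra.
From mathcomp Require Import all_classical all_reals all_analysis.
From mathcomp Require Import ring lra.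
Set Implicit Arguments. Unset Strict Implicit. Unset Printing Implicit Defensive.
Import Order.TTheory GRing.Theory Num.Theory.
Local Open Scope classical_set_scope.
Local Open Scope ring_scope.

Section SmallReals.
Variable R : realType.

Lemma fin_forall_small (I : finType) (P : I -> R -> Prop) :
  (forall i, exists2 e, 0 < e & forall d, 0 < d <= e -> P i d) ->
  exists2 e, 0 < e & forall d, 0 < d <= e -> forall i, P i d.
Proof.
move=> H.
have /choice[e He] : forall i, exists e, 0 < e /\ forall d, 0 < d <= e -> P i d.
  by move=> i; have [e e_gt0 Pe] := H i; exists e.
exists (\big[Order.min/1]_i e i); first by apply: lt_bigmin => // i _; case: (He i).
move=> d /andP[d_gt0 d_le] i; apply: (He i).2; rewrite d_gt0 /=.
exact: le_trans d_le (bigmin_le _ _ _).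
Qed.

Lemma affine_le0_near0 (I : finType) (P : I -> Prop) (a b : I -> R) :
  (forall i, P i -> a i <= 0 /\ (a i = 0 -> b i <= 0)) ->
  exists2 t0, 0 < t0 & forall t, 0 < t <= t0 -> forall i, P i -> a i + t * b i <= 0.
Proof.
move=> H; apply: (fin_forall_small (P := fun i t => P i -> a i + t * b i <= 0)) => i.
have [Pi|nPi] := pselect (P i); last by exists 1 => // t _ /nPi.
have [a_le0 b_le0] := H i Pi.
have [a0|a_neq0] := eqVneq (a i) 0.
  exists 1 => // t /andP[t_gt0 _] _; rewrite a0 add0r.
  exact: mulr_ge0_le0 (ltW t_gt0) (b_le0 a0).
have a_lt0 : a i < 0 by rewrite lt_neqAle a_neq0.
have nb_gt0 : 0 < `|b i| + 1 by rewrite ltr_wpDl.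
exists (- a i / (`|b i| + 1)); first by rewrite divr_gt0 ?oppr_gt0.
move=> t /andP[t_gt0]; rewrite ler_pdivlMr // => t_le _.
have : t * b i <= t * `|b i| by rewrite ler_pM2l // ler_norm.
have : t * `|b i| <= t * (`|b i| + 1) by rewrite ler_pM2l // lerDl.
lra.
Qed.

Lemma exists_sqr_lt (eta : R) : 0 < eta -> exists2 r, 0 < r & r ^+ 2 < eta.
Proof.
move=> eta_gt0; have h2 : 0 <= eta / 2 by rewrite divr_ge0 ?ltW.
exists (Num.sqrt (eta / 2)); first by rewrite sqrtr_gt0 divr_gt0.
by rewrite sqr_sqrtr // ltr_pdivrMr // ltr_pMr // ltr1n.
Qed.

Lemma ediff_quot_ge (a : \bar R) (tau t s : R) : 0 < t ->
  ((tau + t * s)%:E <= a -> s%:E <= (a - tau%:E) * (t^-1)%:E)%E.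
Proof.
move=> t_gt0; case: a => [rho||] //.
  by rewrite -EFinB -EFinM !lee_fin ler_pdivlMr // => h; lra.
by rewrite addye // gt0_mulye ?leey // lte_fin invr_gt0.
Qed.

Lemma ediff_quot_le (a : \bar R) (tau t s : R) : 0 < t ->
  (a <= (tau + t * s)%:E -> (a - tau%:E) * (t^-1)%:E <= s%:E)%E.
Proof.
move=> t_gt0; case: a => [rho||] //.
  by rewrite -EFinB -EFinM !lee_fin ler_pdivrMr // => h; lra.
by rewrite addNye // gt0_mulNye ?leNye // lte_fin invr_gt0.
Qed.

End SmallReals.

Section InnerProduct.
Variables (R : realType) (m : nat).
Local Notation vec := 'rV[R]_m.

Lemma innerDl (a b v : vec) : inner (a + b) v = inner a v + inner b v.
Proof. by rewrite /inner -big_split; apply: eq_bigr => i _; rewrite !mxE mulrDl. Qed.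

Lemma innerDr (a v w : vec) : inner a (v + w) = inner a v + inner a w.
Proof. by rewrite /inner -big_split; apply: eq_bigr => i _; rewrite !mxE mulrDr. Qed.

Lemma innerZl s (a v : vec) : inner (s *: a) v = s * inner a v.
Proof. by rewrite /inner mulr_sumr; apply: eq_bigr => i _; rewrite !mxE mulrA. Qed.

Lemma innerZr s (a v : vec) : inner a (s *: v) = s * inner a v.
Proof. by rewrite /inner mulr_sumr; apply: eq_bigr => i _; rewrite !mxE mulrCA. Qed.

Lemma innerC (a v : vec) : inner a v = inner v a.
Proof. by apply: eq_bigr => i _; rewrite mulrC. Qed.

Lemma innerNl (a v : vec) : inner (- a) v = - inner a v.
Proof. by rewrite -scaleN1r innerZl mulN1r. Qed.

Lemma innerNr (a v : vec) : inner a (- v) = - inner a v.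
Proof. by rewrite -scaleN1r innerZr mulN1r. Qed.

Lemma innerBl (a b v : vec) : inner (a - b) v = inner a v - inner b v.
Proof. by rewrite innerDl innerNl. Qed.

Lemma innerBr (a v w : vec) : inner a (v - w) = inner a v - inner a w.
Proof. by rewrite innerDr innerNr. Qed.

Lemma inner0r (a : vec) : inner a 0 = 0.
Proof. by rewrite /inner big1 // => i _; rewrite mxE mulr0. Qed.

Lemma sqnorm_ge0 (v : vec) : 0 <= sqnorm v.
Proof. by apply: sumr_ge0 => i _; rewrite -expr2 sqr_ge0. Qed.

Lemma sqnormZ s (v : vec) : sqnorm (s *: v) = s ^+ 2 * sqnorm v.
Proof. by rewrite /sqnorm innerZl innerZr mulrA expr2. Qed.

Lemma sqnormD_le (u v : vec) : sqnorm (u + v) <= 2 * (sqnorm u + sqnorm v).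
Proof.
rewrite /sqnorm /inner -big_split /= mulr_sumr; apply: ler_sum => i _.
by rewrite !mxE; have := sqr_ge0 (u 0 i - v 0 i); rewrite expr2 => h; nra.
Qed.

Lemma vnorm_ltE (v : vec) e : 0 < e -> (vnorm v < e) = (sqnorm v < e ^+ 2).
Proof.
move=> e_gt0; rewrite /vnorm -{1}(ger0_norm (ltW e_gt0)) -sqrtr_sqr.
by rewrite ltr_sqrt // exprn_gt0.
Qed.

Lemma inner_amgm (a v : vec) s : 0 < s ->
  2 * inner a v <= s * sqnorm a + sqnorm v / s.
Proof.
move=> s_gt0; rewrite /sqnorm /inner mulr_sumr mulr_sumr mulr_suml -big_split /=.
apply: ler_sum => i _.
have sq_ge0 : 0 <= (s * a 0 i - v 0 i) ^+ 2 / s by rewrite divr_ge0 ?sqr_ge0 ?ltW.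
have -> : s * (a 0 i * a 0 i) + v 0 i * v 0 i / s =
          (s * a 0 i - v 0 i) ^+ 2 / s + 2 * (a 0 i * v 0 i).
  by field; rewrite gt_eqF.
by rewrite lerDr.
Qed.

Lemma inner_small (a : vec) d : 0 < d ->
  exists2 eta, 0 < eta & forall v, sqnorm v < eta -> inner a v < d.
Proof.
move=> d_gt0; have Na_ge0 := sqnorm_ge0 a.
set s := d / (sqnorm a + 1).
have s_gt0 : 0 < s by rewrite divr_gt0 // ltr_wpDl.
exists (d * s) => [|v v_small]; first by rewrite mulr_gt0.
have : s * sqnorm a < d.
  by rewrite /s mulrAC ltr_pdivrMr ?ltr_wpDl // ltr_pM2l // ltrDl.
have : sqnorm v / s < d by rewrite ltr_pdivrMr // mulrC.
have := inner_amgm a v s_gt0; lra.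
Qed.

Lemma inner_near (a w : vec) d : 0 < d ->
  exists2 e, 0 < e & forall w', vnorm (w' - w) < e -> inner a w - d < inner a w'.
Proof.
move=> d_gt0; have [eta eta_gt0 Heta] := inner_small (- a) d_gt0.
have [e e_gt0 e_sqr] := exists_sqr_lt eta_gt0.
exists e => // w'; rewrite vnorm_ltE // => w'_near.
have := Heta _ (lt_trans w'_near e_sqr); rewrite innerNl innerBr; lra.
Qed.

Lemma in_ball2_small (zb lb : vec) eta : 0 < eta -> exists2 r, 0 < r &
  forall z l, in_ball2 r zb lb z l -> sqnorm (z - zb) < eta /\ sqnorm (l - lb) < eta.
Proof.
move=> eta_gt0; have [r r_gt0 r_sqr] := exists_sqr_lt eta_gt0.
exists r => // z l; rewrite /in_ball2.
have := sqnorm_ge0 (z - zb); have := sqnorm_ge0 (l - lb); lra.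
Qed.

Lemma rel_int_extend (C : set vec) x y : rel_int C x -> C y ->
  exists2 s, 0 < s & C ((1 + s) *: x - s *: y).
Proof.
move=> [Cx [e [e_gt0 He]]] Cy.
have N_ge0 := sqnorm_ge0 (x - y); set N := sqnorm (x - y) in N_ge0.
set s := e / (N + 1).
have s_gt0 : 0 < s by rewrite divr_gt0 // ltr_wpDl.
exists s => //; apply: He.
  exists 2%N, (fun i : 'I_2 => if i == ord0 then x else y),
    (fun i : 'I_2 => if i == ord0 then 1 + s else - s).
  split; first by move=> i /=; case: ifP.
  by rewrite !big_ord_recr !big_ord0 /= !add0r scaleNr; split => //; ring.
have -> : (1 + s) *: x - s *: y - x = s *: (x - y).
  by apply/rowP => j; rewrite !mxE; ring.
rewrite vnorm_ltE // sqnormZ -/N /s expr_div_n mulrAC.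
rewrite ltr_pdivrMr ?exprn_gt0 ?ltr_wpDl //.
by rewrite ltr_pM2l ?exprn_gt0 // expr2; nra.
Qed.

Lemma rel_int_near (C : set vec) x : rel_int C x ->
  exists2 d, 0 < d & forall y, C y -> sqnorm (y - x) < d -> rel_int C y.
Proof.
move=> [_ [e [e_gt0 He]]].
have e2_gt0 : 0 < e / 2 by rewrite divr_gt0.
exists ((e / 2) ^+ 2) => [|y Cy y_near]; first by rewrite exprn_gt0.
split => //; exists (e / 2); split => // y' hy'; rewrite !vnorm_ltE // => y'_near.
apply: He hy' _; rewrite vnorm_ltE // -(subrK y y') -addrA.
apply: le_lt_trans (sqnormD_le _ _) _.
have -> : e ^+ 2 = 2 * ((e / 2) ^+ 2 + (e / 2) ^+ 2) by field.
by rewrite ltr_pM2l // ltrD.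
Qed.

End InnerProduct.

Section Subderivative.
Variables (R : realType) (m : nat) (g : 'rV[R]_m -> \bar R) (z w : 'rV[R]_m).
Local Notation quot t w' := ((g (z + t *: w') - g z) * (t^-1)%:E)%E.

Lemma subderiv_le (x : \bar R) :
  (forall e, 0 < e -> exists2 t, 0 < t < e & (quot t w <= x)%E) ->
  (subderiv g z w <= x)%E.
Proof.
move=> H; apply: ge_ereal_sup => _ [e e_gt0 <-].
have [t t_e Ht] := H e e_gt0; apply: le_trans Ht; apply: ereal_inf_lbound.
exists t, w; do 2!split => //.
by rewrite subrr /vnorm /sqnorm inner0r sqrtr0.
Qed.

Lemma subderiv_ge (x : \bar R) e : 0 < e ->
  (forall t w', 0 < t < e -> vnorm (w' - w) < e -> (x <= quot t w')%E) ->
  (x <= subderiv g z w)%E.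
Proof.
move=> e_gt0 H; apply: le_trans (ereal_sup_ubound _); last by exists e.
by apply: le_ereal_inf_tmp => _ [t [w' [t_e [w'_near ->]]]]; exact: H.
Qed.

End Subderivative.

Section Polyhedral.
Variables (R : realType) (m k : nat).
Local Notation vec := 'rV[R]_m.
Variables (g : vec -> \bar R) (A : 'I_k -> vec) (c b : 'I_k -> R).
Hypothesis epiP :
  forall x t, (g x <= t%:E)%E <-> (forall i, inner (A i) x + c i * t <= b i).
Hypothesis g_neqNy : forall x, g x <> -oo%E.

Definition cstr i (w : vec) (s : R) := inner (A i) w + c i * s.

Definition tcone (z : vec) (tau : R) (w : vec) (s : R) :=
  forall i, cstr i z tau = b i -> cstr i w s <= 0.

Definition supports (z : vec) (tau : R) (l : vec) :=
  forall w s, tcone z tau w s -> inner l w <= s.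

Definition critical (z : vec) (tau : R) (l w : vec) := tcone z tau w (inner l w).

Lemma cstrD i w1 s1 w2 s2 : cstr i (w1 + w2) (s1 + s2) = cstr i w1 s1 + cstr i w2 s2.
Proof. by rewrite /cstr innerDr; ring. Qed.

Lemma cstrZ i a w s : cstr i (a *: w) (a * s) = a * cstr i w s.
Proof. by rewrite /cstr innerZr; ring. Qed.

Lemma cstrN i w s : cstr i (- w) (- s) = - cstr i w s.
Proof. by rewrite /cstr innerNr; ring. Qed.

Lemma cstrB i w1 s1 w2 s2 : cstr i (w1 - w2) (s1 - s2) = cstr i w1 s1 - cstr i w2 s2.
Proof. by rewrite cstrD cstrN. Qed.

Lemma cstr_le z tau i : g z = tau%:E -> cstr i z tau <= b i.
Proof. by move=> gz; apply: (proj1 (epiP z tau) _ i); rewrite gz. Qed.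

Lemma cstr_gt x t i : b i < cstr i x t -> (t%:E < g x)%E.
Proof.
move=> violated; rewrite ltNge; apply/negP => /epiP/(_ i).
by rewrite /cstr in violated; lra.
Qed.

Lemma c_le0 z tau i : g z = tau%:E -> c i <= 0.
Proof.
move=> gz; rewrite leNgt; apply/negP => c_gt0.
set s := (`|b i - cstr i z tau| + 1) / c i.
have : (g z <= (tau + s)%:E)%E by rewrite gz lee_fin lerDl divr_ge0 ?ltW // ltr_wpDl.
move/epiP/(_ i); rewrite mulrDr /s mulrCA divff ?gt_eqF // mulr1 addrA.
by have := ler_norm (b i - cstr i z tau); rewrite /cstr; lra.
Qed.

Lemma tcone_small z tau w s : g z = tau%:E -> tcone z tau w s ->
  exists2 t0, 0 < t0 &
    forall t, 0 < t <= t0 -> forall i, cstr i (z + t *: w) (tau + t * s) <= b i.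
Proof.
move=> gz Tws.
have [|t0 t0_gt0 Ht] := affine_le0_near0 (P := fun=> True)
  (a := fun i => cstr i z tau - b i) (b := fun i => cstr i w s).
  move=> i _; rewrite subr_le0 cstr_le //; split => // /eqP.
  by rewrite subr_eq0 => /eqP /Tws.
by exists t0 => // t t_small i; have := Ht t t_small i I; rewrite cstrD cstrZ; lra.
Qed.

Lemma tcone_step z tau w s : g z = tau%:E -> tcone z tau w s ->
  exists2 t0, 0 < t0 & forall t, 0 < t <= t0 -> (g (z + t *: w) <= (tau + t * s)%:E)%E.
Proof.
move=> gz /(tcone_small gz)[t0 t0_gt0 Ht].
by exists t0 => // t t_small; apply/epiP; exact: Ht.
Qed.

Lemma subdiffP z tau l : g z = tau%:E -> subdiff g z l <-> supports z tau l.
Proof.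
move=> gz; split=> [[_ Hl] w s /(tcone_step gz)[t0 t0_gt0 Ht]|Hl].
  have : ((tau + t0 * inner l w)%:E <= (tau + t0 * s)%:E)%E.
    apply: le_trans (Ht t0 _); last by rewrite t0_gt0 lexx.
    by have := Hl (z + t0 *: w); rewrite addrAC subrr add0r gz innerZr.
  by rewrite lee_fin lerD2l ler_pM2l.
split=> [|x]; first by rewrite gz.
case gx: (g x) => [rho||]; [|exact: leey|by case: (g_neqNy gx)].
rewrite gz -EFinD lee_fin -lerBrDl; apply: Hl => i act_i.
by rewrite cstrB act_i subr_le0; exact: cstr_le.
Qed.

Lemma subderiv_tcone_le z tau w s : g z = tau%:E -> tcone z tau w s ->
  (subderiv g z w <= s%:E)%E.
Proof.
move=> gz /(tcone_step gz)[t0 t0_gt0 Ht]; apply: subderiv_le => e e_gt0.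
have t_gt0 : 0 < Num.min t0 (e / 2) by rewrite lt_min t0_gt0 divr_gt0.
exists (Num.min t0 (e / 2)).
  by rewrite t_gt0 gt_min ltr_pdivrMr // ltr_pMr // ltr1n orbT.
by rewrite gz; apply: ediff_quot_le => //; apply: Ht; rewrite t_gt0 ge_min lexx.
Qed.

Lemma inner_le_subderiv z tau l w : g z = tau%:E -> subdiff g z l ->
  ((inner l w)%:E <= subderiv g z w)%E.
Proof.
move=> gz [_ Hl]; apply/lee_addgt0Pr => d d_gt0; rewrite -leeBlDr //.
have [e e_gt0 He] := inner_near l w d_gt0.
apply: (subderiv_ge e_gt0) => t w' /andP[t_gt0 _] /He w'_near.
apply: (@le_trans _ _ (inner l w')%:E); first by rewrite lee_fin ltW.
rewrite gz; apply: ediff_quot_ge => //.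
by have := Hl (z + t *: w'); rewrite addrAC subrr add0r gz innerZr.
Qed.

Lemma subderiv_gt z tau w s : g z = tau%:E -> ~ tcone z tau w s ->
  (s%:E < subderiv g z w)%E.
Proof.
move=> gz /existsNP[i /not_implyP[act_i /negP]]; rewrite -ltNge => gam_gt0.
set gam := cstr i w s in gam_gt0.
have den_gt0 : 0 < 2 * (`|c i| + 1) by rewrite mulr_gt0 // ltr_wpDl.
set del := gam / (2 * (`|c i| + 1)).
have del_gt0 : 0 < del by rewrite divr_gt0.
have cdel : - (gam / 2) <= c i * del.
  have dE : del * (2 * (`|c i| + 1)) = gam by rewrite divfK ?gt_eqF.
  have : - `|c i| * del <= c i * del by rewrite ler_pM2r // lerNnormlW.
  lra.
have [e e_gt0 He] := inner_near (A i) w (divr_gt0 gam_gt0 (ltr0n R 2)).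
apply: (@lt_le_trans _ _ (s + del)%:E); first by rewrite lte_fin ltrDl.
apply: (subderiv_ge e_gt0) => t w' /andP[t_gt0 _] /He w'_near.
rewrite gz; apply: ediff_quot_ge => //; apply/ltW/(@cstr_gt _ _ i).
rewrite cstrD cstrZ act_i ltrDl mulr_gt0 //.
have gamE : gam = inner (A i) w + c i * s by [].
by move: w'_near; rewrite /cstr; lra.
Qed.

Lemma crit_coneP z tau l w : g z = tau%:E -> subdiff g z l ->
  crit_cone g z l w <-> critical z tau l w.
Proof.
move=> gz l_sub; split=> [crit|Tw].
  by apply: contrapT => /(subderiv_gt gz); rewrite -crit ltxx.
by apply/eqP; rewrite eq_le (inner_le_subderiv _ gz) // (subderiv_tcone_le gz).
Qed.

Lemma active_slope_lt0 z tau : g z = tau%:E -> exists i, cstr i z tau = b i /\ c i < 0.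
Proof.
move=> gz; apply: contrapT => no_neg.
have [|t0 t0_gt0 Ht] := tcone_step (w := 0) (s := -1) gz.
  move=> i act_i; rewrite /cstr inner0r add0r mulrN1 oppr_le0 leNgt.
  by apply/negP => c_lt0; apply: no_neg; exists i.
have := Ht t0; rewrite t0_gt0 lexx scaler0 addr0 gz lee_fin => /(_ isT).
lra.
Qed.

Lemma supports_active z tau i : cstr i z tau = b i -> c i < 0 ->
  supports z tau ((- c i)^-1 *: A i).
Proof.
move=> act_i c_lt0 w s /(_ i act_i); rewrite innerZl ler_pdivrMl ?oppr_gt0 // /cstr.
lra.
Qed.

(* Pushing (x, <l, x>) slightly away from (w, s) keeps it in the cone, and
   the functional (v, r) |-> <l, v> - r attains its maximum 0 there. *)
Lemma supports_face_le z tau l x w s : supports z tau l -> critical z tau l x ->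
  tcone z tau w s ->
  (forall i, cstr i z tau = b i -> cstr i x (inner l x) = 0 -> cstr i w s = 0) ->
  s <= inner l w.
Proof.
move=> l_supp x_crit Tws tight.
have [|t0 t0_gt0 Ht] := affine_le0_near0 (P := fun i => cstr i z tau = b i)
  (a := fun i => cstr i x (inner l x))
  (b := fun i => cstr i x (inner l x) - cstr i w s).
  move=> i act_i; split=> [|x0]; first exact: x_crit.
  by rewrite x0 tight // subrr.
have := l_supp (x + t0 *: (x - w)) (inner l x + t0 * (inner l x - s)).
rewrite innerDr innerZr innerBr lerD2l ler_pM2l // lerD2l lerN2; apply.
by move=> i act_i; rewrite cstrD cstrZ cstrB; apply: Ht; rewrite ?t0_gt0 ?lexx.
Qed.

Lemma criticalD z tau l x y :
  critical z tau l x -> critical z tau l y -> critical z tau l (x + y).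
Proof.
move=> x_crit y_crit i act_i; rewrite innerDr cstrD.
by have := x_crit i act_i; have := y_crit i act_i; lra.
Qed.

Lemma criticalZ z tau l a x : 0 <= a -> critical z tau l x -> critical z tau l (a *: x).
Proof.
by move=> a_ge0 x_crit i act_i; rewrite innerZr cstrZ mulr_ge0_le0 // x_crit.
Qed.

Section Reference.
Variables (zb lb : vec) (tb : R).
Hypothesis gzb : g zb = tb%:E.
Hypothesis lb_sub : subdiff g zb lb.

Lemma lb_supports : supports zb tb lb.
Proof. exact/(subdiffP _ gzb). Qed.

(* S records which active constraints are tight at (x, <l, x>).  Either the
   face of T(zb) cut out by S has a point (w0, s0) with <lb, w0> < s0, which
   supports_face_le forbids for every l near lb, or it has none, and then
   (x, <l, x>) itself gives <l, x> <= <lb, x>. *)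
Lemma critical_pattern (S : {set 'I_k}) : exists2 e, 0 < e &
  forall d, 0 < d <= e -> forall l, supports zb tb l -> sqnorm (l - lb) < d ->
  forall x, critical zb tb l x ->
  (forall i, cstr i zb tb = b i -> (i \in S) = (cstr i x (inner l x) == 0)) ->
  inner l x <= inner lb x.
Proof.
have [[w0 [s0 [[Tw0 tight0] gap]]]|no_witness] := pselect (exists w0 s0,
  (tcone zb tb w0 s0 /\ forall i, cstr i zb tb = b i -> i \in S -> cstr i w0 s0 = 0) /\
  inner lb w0 < s0).
  have /(inner_small w0)[eta eta_gt0 Heta] : 0 < s0 - inner lb w0 by rewrite subr_gt0.
  exists eta => // d /andP[_ d_le] l l_supp l_near x x_crit hS; exfalso.
  have : s0 <= inner l w0.
    apply: supports_face_le l_supp x_crit Tw0 _ => i act_i x0.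
    by rewrite tight0 // hS // x0.
  have := Heta (l - lb) (lt_le_trans l_near d_le); rewrite innerC innerBl; lra.
exists 1 => // d _ l l_supp l_near x x_crit hS; rewrite leNgt; apply/negP => gap.
apply: no_witness; exists x, (inner l x); split=> //; split=> // i act_i.
by rewrite hS // => /eqP.
Qed.

Lemma critical_near_base : exists2 e, 0 < e & forall l, supports zb tb l ->
  sqnorm (l - lb) < e -> forall x, critical zb tb l x -> critical zb tb lb x.
Proof.
have [e e_gt0 He] := fin_forall_small critical_pattern.
exists e => // l l_supp l_near x x_crit.
have lx_le : inner l x <= inner lb x.
  apply: (He e _ [set i | cstr i x (inner l x) == 0]%SET) => // [|i _].
    by rewrite e_gt0 lexx.
  by rewrite inE.
rewrite /critical (_ : inner lb x = inner l x) //.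
by apply/le_anti; rewrite lx_le lb_supports.
Qed.

Lemma active_near : exists2 eta, 0 < eta & forall z tau, g z = tau%:E ->
  sqnorm (z - zb) < eta -> forall i, cstr i z tau = b i -> cstr i zb tb = b i.
Proof.
have [|eta eta_gt0 Heta] := fin_forall_small (P := fun i d => forall v, sqnorm v < d ->
  cstr i zb tb <> b i -> inner (A i + c i *: lb) v < b i - cstr i zb tb).
  move=> i; have [act_i|inact_i] := pselect (cstr i zb tb = b i).
    by exists 1 => // d _ v _ /(_ act_i).
  have slack_gt0 : 0 < b i - cstr i zb tb.
    by rewrite subr_gt0 lt_neqAle (cstr_le _ gzb) andbT; apply/eqP.
  have [eta eta_gt0 Heta] := inner_small (A i + c i *: lb) slack_gt0.
  exists eta => // d /andP[_ d_le] v v_small _.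
  exact: Heta (lt_le_trans v_small d_le).
exists eta => // z tau gz z_near i act_i; apply: contrapT => inact_i.
have := Heta eta _ i (z - zb) z_near inact_i; rewrite eta_gt0 lexx => /(_ isT).
have lb_step : tb + inner lb (z - zb) <= tau.
  by have := lb_sub.2 z; rewrite gzb gz -EFinD lee_fin.
have : c i * (tau - tb) <= c i * inner lb (z - zb).
  by rewrite ler_wnM2l ?(c_le0 _ gzb) //; lra.
have : cstr i z tau = cstr i zb tb + cstr i (z - zb) (tau - tb) by rewrite cstrB; ring.
by move: act_i; rewrite innerDl innerZl /cstr; lra.
Qed.

Section NearPoint.
Variables (z l : vec) (tau : R).
Hypothesis gz : g z = tau%:E.
Hypothesis l_sub : subdiff g z l.
Hypothesis active_sub : forall i, cstr i z tau = b i -> cstr i zb tb = b i.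

Lemma cstr_shift i :
  cstr i zb tb = b i -> cstr i (z - zb) (tau - tb) = cstr i z tau - b i.
Proof. by move=> act_i; rewrite cstrB act_i. Qed.

Lemma tcone_shift : tcone zb tb (z - zb) (tau - tb).
Proof. by move=> i act_i; rewrite cstr_shift // subr_le0 (cstr_le _ gz). Qed.

Lemma supports_shift y : supports z tau y -> inner y (z - zb) = tau - tb.
Proof.
move=> y_supp; apply/le_anti; apply/andP; split.
  by apply: y_supp => i act_i; rewrite cstr_shift ?active_sub // act_i subrr.
rewrite -lerN2 -innerNr; apply: y_supp => i act_i.
by rewrite cstrN cstr_shift ?active_sub // act_i subrr oppr0.
Qed.

Lemma supports_base y : supports z tau y -> supports zb tb y.
Proof.
move=> y_supp w s Tws.
have : inner y (w - (z - zb)) <= s - (tau - tb).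
  apply: y_supp => i act_i.
  rewrite cstrB cstr_shift ?active_sub // act_i subrr subr0.
  exact: Tws (active_sub act_i).
by rewrite innerBr supports_shift //; lra.
Qed.

Lemma tcone_base_step w s : tcone z tau w s ->
  exists2 t, 0 < t & tcone zb tb (z - zb + t *: w) (tau - tb + t * s).
Proof.
move=> /(tcone_small gz)[t0 t0_gt0 Ht]; exists t0 => // i act_i.
have := Ht t0; rewrite t0_gt0 lexx cstrD cstrZ => /(_ isT i).
by rewrite cstrD cstrZ cstr_shift //; lra.
Qed.

Lemma l_supports : supports z tau l.
Proof. exact/(subdiffP _ gz). Qed.

Lemma critical_of_lineality w :
  critical zb tb lb w -> critical zb tb lb (- w) -> critical z tau l w.
Proof.
move=> w_crit Nw_crit.
have tight i : cstr i zb tb = b i -> cstr i w (inner lb w) = 0.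
  move=> act_i; apply/le_anti; rewrite w_crit //=.
  by have := Nw_crit i act_i; rewrite innerNr cstrN oppr_le0.
have lw_le : inner l w <= inner lb w.
  by apply: l_supports => i act_i; rewrite tight ?active_sub.
have lNw_le : inner l (- w) <= - inner lb w.
  by apply: l_supports => i act_i; rewrite cstrN tight ?active_sub ?oppr0.
rewrite /critical (_ : inner l w = inner lb w); last by rewrite innerNr in lNw_le; lra.
by move=> i act_i; rewrite tight ?active_sub.
Qed.

Hypothesis l_crit_base : forall x, critical zb tb l x -> critical zb tb lb x.

Lemma shift_critical_base : critical zb tb lb (z - zb).
Proof.
by apply: l_crit_base; rewrite /critical (supports_shift l_supports); exact: tcone_shift.
Qed.

Lemma critical_sub_diff w : critical z tau l w ->
  exists u v, [/\ critical zb tb lb u, critical zb tb lb v & w = u - v].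
Proof.
move=> /tcone_base_step[t t_gt0 Tt].
have t_crit : critical zb tb lb (z - zb + t *: w).
  by apply: l_crit_base; rewrite /critical innerDr innerZr (supports_shift l_supports).
exists (t^-1 *: (z - zb + t *: w)), (t^-1 *: (z - zb)); split.
- by apply: criticalZ t_crit; rewrite invr_ge0 ltW.
- by apply: criticalZ shift_critical_base; rewrite invr_ge0 ltW.
- by rewrite -scalerBr addrC addKr scalerA mulVf ?gt_eqF // scale1r.
Qed.

Lemma supports_of_base y :
  (forall x, critical zb tb lb x -> critical zb tb lb (- x)) ->
  supports zb tb y -> supports z tau y.
Proof.
move=> critN y_supp w s /tcone_base_step[t t_gt0 Tt].
have base_u y' : supports zb tb y' -> inner y' (z - zb) = inner lb (z - zb).
  move=> y'_supp; apply/le_anti/andP; split.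
    exact: y'_supp _ _ shift_critical_base.
  by rewrite -lerN2 -!innerNr; exact: y'_supp _ _ (critN _ shift_critical_base).
have yu : inner y (z - zb) = tau - tb.
  rewrite base_u // -(base_u l (supports_base l_supports)).
  exact: supports_shift l_supports.
by have := y_supp _ _ Tt; rewrite innerDr innerZr yu lerD2l ler_pM2l.
Qed.

End NearPoint.

Section RelativeInterior.
Hypothesis lb_ri : rel_int (subdiff g zb) lb.

Lemma ri_supports_ge l x : supports zb tb l -> critical zb tb lb x ->
  inner lb x <= inner l x.
Proof.
move=> l_supp x_crit.
have [s s_gt0] := rel_int_extend lb_ri (proj2 (subdiffP _ gzb) l_supp).
move=> /(subdiffP _ gzb)/(_ _ _ x_crit).
rewrite innerDl innerNl !innerZl mulrDl mul1r => h.
have : s * inner lb x <= s * inner l x by lra.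
by rewrite ler_pM2l.
Qed.

(* The active constraint i is tested by the subgradient (-c_i)^-1 A_i when
   c_i < 0, and by (-c_i0)^-1 A_i0 + A_i when c_i = 0, where c_i0 < 0. *)
Lemma ri_critical_tight x : critical zb tb lb x ->
  forall i, cstr i zb tb = b i -> cstr i x (inner lb x) = 0.
Proof.
move=> x_crit i act_i; apply/le_anti; rewrite x_crit //=.
have [i0 [act_i0 c_i0]] := active_slope_lt0 gzb.
have a0_supp := supports_active act_i0 c_i0.
have [c_lt0|c_ge0] := ltrP (c i) 0.
  have := ri_supports_ge (supports_active act_i c_lt0) x_crit.
  by rewrite innerZl ler_pdivlMl ?oppr_gt0 // /cstr; lra.
have c0 : c i = 0 by apply/le_anti; rewrite c_ge0 (c_le0 _ gzb).
have sum_supp : supports zb tb ((- c i0)^-1 *: A i0 + A i).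
  move=> w s Tws; rewrite innerDl; have := a0_supp _ _ Tws; have := Tws i act_i.
  by rewrite /cstr c0 mul0r addr0; lra.
have := ri_supports_ge sum_supp x_crit; have := a0_supp _ _ x_crit.
by rewrite innerDl /cstr c0 mul0r addr0; lra.
Qed.

Lemma ri_criticalN x : critical zb tb lb x -> critical zb tb lb (- x).
Proof. by move=> x_crit i act_i; rewrite innerNr cstrN ri_critical_tight // oppr0. Qed.

End RelativeInterior.

Lemma near_reference : exists2 eta, 0 < eta & forall z l, subdiff g z l ->
  sqnorm (z - zb) < eta -> sqnorm (l - lb) < eta ->
  exists tau, [/\ g z = tau%:E, forall i, cstr i z tau = b i -> cstr i zb tb = b i &
                  forall x, critical zb tb l x -> critical zb tb lb x].
Proof.
have [e1 e1_gt0 He1] := active_near.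
have [e2 e2_gt0 He2] := critical_near_base.
exists (Num.min e1 e2) => [|z l l_sub]; first by rewrite lt_min e1_gt0.
rewrite !lt_min => /andP[z_near _] /andP[_ l_near].
have gz := esym (fineK l_sub.1); exists (fine (g z)); split => //; first exact: He1.
apply: (He2 l _ l_near); apply: (supports_base (He1 _ _ gz z_near)).
exact/(subdiffP _ gz).
Qed.

Lemma crit_cone_near : exists r : R, 0 < r /\
  forall z l, subdiff g z l -> in_ball2 r zb lb z l ->
    crit_cone g z l `<=` set_diff_minkowski (crit_cone g zb lb) /\
    crit_cone g zb lb `&` set_opp (crit_cone g zb lb) `<=` crit_cone g z l.
Proof.
have [eta eta_gt0 Hnear] := near_reference.
have [r r_gt0 Hr] := in_ball2_small zb lb eta_gt0.
exists r; split => // z l l_sub /Hr[z_near l_near].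
have [tau [gz act_sub l_crit]] := Hnear z l l_sub z_near l_near.
split=> w.
  move=> /(crit_coneP _ gz l_sub)/(critical_sub_diff gz l_sub act_sub l_crit).
  move=> [u [v [u_crit v_crit ->]]]; exists u, v.
  by split; [|split] => //; exact/(crit_coneP _ gzb lb_sub).
move=> [/(crit_coneP _ gzb lb_sub) w_crit /(crit_coneP _ gzb lb_sub) Nw_crit].
exact/(crit_coneP _ gz l_sub)/(critical_of_lineality gz l_sub act_sub).
Qed.

Lemma crit_cone_near_ri : rel_int (subdiff g zb) lb -> exists r : R, 0 < r /\
  forall z l, subdiff g z l -> in_ball2 r zb lb z l ->
    rel_int (subdiff g z) l /\ crit_cone g z l = crit_cone g zb lb.
Proof.
move=> lb_ri; have critN := ri_criticalN lb_ri.
have [eta eta_gt0 Hnear] := near_reference.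
have [d d_gt0 Hd] := rel_int_near lb_ri.
have min_gt0 : 0 < Num.min eta d by rewrite lt_min eta_gt0.
have [r r_gt0 Hr] := in_ball2_small zb lb min_gt0.
exists r; split => // z l l_sub /Hr[].
rewrite !lt_min => /andP[z_near _] /andP[l_near l_near'].
have [tau [gz act_sub l_crit]] := Hnear z l l_sub z_near l_near.
have subdiff_eq : subdiff g z = subdiff g zb.
  apply/funext => y; apply/propext; split.
    by move=> /(subdiffP _ gz)/(supports_base act_sub) y_supp; exact/(subdiffP _ gzb).
  move=> /(subdiffP _ gzb)/(supports_of_base gz l_sub act_sub l_crit critN) y_supp.
  exact/(subdiffP _ gz).
split; first by rewrite subdiff_eq; apply: Hd l_near'; rewrite -subdiff_eq.
apply/seteqP; split => w.
  move=> /(crit_coneP _ gz l_sub)/(critical_sub_diff gz l_sub act_sub l_crit).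
  move=> [u [v [u_crit v_crit ->]]]; apply/(crit_coneP _ gzb lb_sub).
  exact: criticalD u_crit (critN v v_crit).
move=> /(crit_coneP _ gzb lb_sub) w_crit; apply/(crit_coneP _ gz l_sub).
exact: (critical_of_lineality gz l_sub act_sub w_crit (critN w w_crit)).
Qed.

End Reference.
End Polyhedral.

Theorem corollary3p4 (R : realType) (m : nat) (g : 'rV[R]_m -> \bar R)
    (zb lb : 'rV[R]_m) :
  polyhedral_fun g -> subdiff g zb lb ->
  (exists r : R, 0 < r /\
     forall z l : 'rV[R]_m, subdiff g z l -> in_ball2 r zb lb z l ->
       crit_cone g z l `<=` set_diff_minkowski (crit_cone g zb lb) /\
       crit_cone g zb lb `&` set_opp (crit_cone g zb lb) `<=` crit_cone g z l) /\
  (rel_int (subdiff g zb) lb ->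
   exists r : R, 0 < r /\
     forall z l : 'rV[R]_m, subdiff g z l -> in_ball2 r zb lb z l ->
       rel_int (subdiff g z) l /\ crit_cone g z l = crit_cone g zb lb).
Proof.
move=> [[g_neqNy _] [k [A [c [b epi]]]]] lb_sub.
have epiP x t : (g x <= t%:E)%E <-> (forall i, inner (A i) x + c i * t <= b i).
  exact: epi (x, t).
have gzb := esym (fineK lb_sub.1).
split; [exact: (crit_cone_near epiP g_neqNy gzb lb_sub)
       |exact: (crit_cone_near_ri epiP g_neqNy gzb lb_sub)].
Qed.
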